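(* In the standard LLP setup, suppose $\overline{K}=\overline{K_{mc}}$ and there is no starting error in $L(G,\gamma^N_{cons})$ (i.e. $f^N_{cons}(\epsilon)\neq\emptyset$). If $N_{mcmc}$ is defined and $N\ge N_{mcmc}+1$, then $L(G,\gamma^N_{cons})=\overline{K^\uparrow}$.
   Context: Standard LLP setup. $\Sigma=\Sigma_c\,\dot\cup\,\Sigma_{uc}$ is a finite alphabet partitioned into controllable and uncontrollable events. The plant $G$ has generated language $L(G)$ and marked language $L_m(G)$ with $L(G)=\overline{L_m(G)}$ ($\overline{M}$ = set of prefixes of strings in $M$). The legal language $K\subseteq L_m(G)$ satisfies $K=\overline{K}\cap L_m(G)$ ($K$ need not be prefix-closed). For a prefix-closed $L$, $M$ is controllable w.r.t. $L$ if $\overline{M}\Sigma_{uc}\cap L\subseteq\overline{M}$; $K^\uparrow$ is the supremal sublanguage of $K$ controllable w.r.t. $L(G)$. For a language $L$ and $s\in\Sigma^*$: $L/s=\{t: st\in L\}$; $L|_N=\{t\in L:|t|\le N\}$; $\Sigma_{L(G)}(s)=\{\sigma\in\Sigma: s\sigma\in L(G)\}$. $M^{\uparrow/s|_N}$ is the supremal sublanguage of $M$ controllable w.r.t. $L(G)/s|_N$. Conservative attitude: $f^N_{cons}(s)=[K/s|_{N-1}]^{\uparrow/s|_N}$; control policy $\gamma^N_{cons}(s)=(\overline{f^N_{cons}(s)}\cap\Sigma)\cup(\Sigma_{uc}\cap\Sigma_{L(G)}(s))$. Closed-loop language $L(G,\gamma)$: $\epsilon\in L(G,\gamma)$, and $s\sigma\in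 L(G,\gamma)$ iff $s\in L(G,\gamma)$, $s\sigma\in L(G)$, $\sigma\in\gamma(s)$. Define $L_c(G)=\{s\in L(G): s\sigma\notin L(G)\ \forall\sigma\in\Sigma_{uc}\}$ and $K_{mc}=K\cap L_c(G)$. Then $N_{mcmc}=\max\{|t|: \exists s\in K_{mc}\cup\{\epsilon\},\ st\in K_{mc}\text{ and } sv\notin K_{mc}\text{ for every nonempty proper prefix } v\text{ of } t\}$ if this maximum exists; otherwise undefined. *)

From mathcomp Require Import all_boot.
Set Implicit Arguments. Unset Strict Implicit. Unset Printing Implicit Defensive.

Section Lang.
Variable Sigma : finType.

Definition word := seq Sigma.
Definition lang := word -> Prop.

Definition lsub (M1 M2 : lang) : Prop := forall s, M1 s -> M2 s.
Definition leq_lang (M1 M2 : lang) : Prop := forall s, M1 s <-> M2 s.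

Definition pclos (M : lang) : lang := fun s => exists t, M (s ++ t).

Definition lquot (L : lang) (s : word) : lang := fun t => L (s ++ t).

Definition ltrunc (L : lang) (N : nat) : lang := fun t => L t /\ size t <= N.

(* M controllable w.r.t. the prefix-closed L, uncontrollable events uc *)
Definition controllable (uc : {set Sigma}) (L M : lang) : Prop :=
  forall s sigma, pclos M s -> sigma \in uc -> L (rcons s sigma) ->
    pclos M (rcons s sigma).

Definition supcon (uc : {set Sigma}) (L M : lang) : lang :=
  fun s => exists M' : lang, lsub M' M /\ controllable uc L M' /\ M' s.

(* Conservative attitude: f^N_cons(s) = [K/s|_{N-1}]^{up/s|_N},
   with L = L(G) the generated language *)
Definition fcons (uc : {set Sigma}) (L K : lang) (N : nat) (s : word) : lang :=
  supcon uc (ltrunc (lquot L s) N) (ltrunc (lquot K s) (N - 1)).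

Definition gcons (uc : {set Sigma}) (L K : lang) (N : nat) (s : word)
  (sigma : Sigma) : Prop :=
  pclos (fcons uc L K N s) [:: sigma] \/ (sigma \in uc /\ L (rcons s sigma)).

Inductive closed_loop (L : lang) (gamma : word -> Sigma -> Prop) : lang :=
| cl_nil : closed_loop L gamma [::]
| cl_rcons s sigma : closed_loop L gamma s -> L (rcons s sigma) ->
    gamma s sigma -> closed_loop L gamma (rcons s sigma).

Definition Lcomp (uc : {set Sigma}) (L : lang) : lang :=
  fun s => L s /\ forall sigma, sigma \in uc -> ~ L (rcons s sigma).

Definition Kmc (uc : {set Sigma}) (L K : lang) : lang :=
  fun s => K s /\ Lcomp uc L s.

(* n belongs to the set whose maximum defines N_mcmc *)
Definition mcmc_len (uc : {set Sigma}) (L K : lang) (n : nat) : Prop :=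
  exists s t : word,
    (Kmc uc L K s \/ s = [::]) /\ Kmc uc L K (s ++ t) /\
    (forall k, 0 < k < size t -> ~ Kmc uc L K (s ++ take k t)) /\
    size t = n.

Definition Nmcmc_is (uc : {set Sigma}) (L K : lang) (n : nat) : Prop :=
  mcmc_len uc L K n /\ forall m, mcmc_len uc L K m -> m <= n.

End Lang.

From mathcomp Require Import all_boot.
From mathcomp Require Import zify.
From Stdlib Require Import Classical.

Set Implicit Arguments. Unset Strict Implicit. Unset Printing Implicit Defensive.

(* Every word splits as s0 u, where s0 is its last K_mc-prefix (or eps) and
   the "gap" u contains no further K_mc-prefix.  By definition of N_mcmc, a
   gap that can still be completed inside \overline{K} = \overline{K_mc} has
   length at most N_mcmc.  Hence
   (1) every string of \overline{K^up} extends inside \overline{K^up} to a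
       string of K_mc: a string of K^up outside K_mc still admits an
       uncontrollable continuation, and the gap cannot grow beyond N_mcmc;
   (2) after any s, the shortest continuations t with st in K_mc and in
       \overline{K^up} have length < N and form a controllable sublanguage of
       K/s|_{N-1}; so they lie in f^N_cons(s), and gamma^N_cons enables every
       event enabled by K^up;
   (3) if s is eps or lies in \overline{K^up}, then K^up together with
       s f^N_cons(s) is a controllable sublanguage of K, so s f^N_cons(s) is
       contained in K^up and gamma^N_cons enables nothing outside it.
   Induction on closed-loop strings then gives both inclusions. *)

Section Supremal.
Variable Sigma : finType.
Variable uc : {set Sigma}.
Implicit Types (L M : lang Sigma) (s t : word Sigma).

Lemma pclos_prefix M s t : pclos M (s ++ t) -> pclos M s.
Proof. by case=> z; rewrite -catA => H; exists (t ++ z). Qed.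

Lemma supcon_sub L M : lsub (supcon uc L M) M.
Proof. by move=> s [M' [HM [_ H]]]; apply: HM. Qed.

Lemma supcon_ctrl L M : controllable uc L (supcon uc L M).
Proof.
move=> s a [t [M' [HM [Hc HMt]]]] Ha HL.
have [t' Ht'] : pclos M' (rcons s a) by apply: Hc => //; exists t.
by exists t'; exists M'.
Qed.

Lemma supcon_max L M (M' : lang Sigma) :
  lsub M' M -> controllable uc L M' -> lsub M' (supcon uc L M).
Proof. by move=> HM Hc s Hs; exists M'. Qed.

Lemma controllable_sub L L' M :
  lsub L' L -> controllable uc L M -> controllable uc L' M.
Proof. by move=> HL Hc s a Hs Ha /HL; apply: Hc. Qed.

End Supremal.

Section Extensions.
Variable Sigma : finType.
Variable P : lang Sigma.
Implicit Types (s t u v w x y z : word Sigma).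

Definition free s t := forall k, 0 < k < size t -> ~ P (s ++ take k t).

Definition hit s t := P (s ++ t) /\ forall j, j < size t -> ~ P (s ++ take j t).

Lemma free_prefix s x y : free s (x ++ y) -> free s x.
Proof.
move=> H k Hk; have := H k; rewrite size_cat take_cat ifT; last lia.
by apply; lia.
Qed.

Lemma free_short s t : size t <= 1 -> free s t.
Proof. by move=> Ht k Hk; lia. Qed.

Lemma free_cat s x y :
  free s x -> (x <> [::] -> y <> [::] -> ~ P (s ++ x)) -> free (s ++ x) y ->
  free s (x ++ y).
Proof.
move=> Hx Hjn Hy k; rewrite size_cat take_cat => Hk.
case: ltnP => Hkx; first by apply: Hx; lia.
case: (eqVneq k (size x)) => [Ek|Nk].
  rewrite Ek subnn take0 cats0; apply: Hjn => [Ex | Ey];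
  by rewrite ?Ex ?Ey /= in Ek Hk; lia.
by rewrite catA; apply: Hy; lia.
Qed.

Lemma hit_free s t : hit s t -> free s t.
Proof. by move=> [_ H] k Hk; apply: H; lia. Qed.

Lemma hit_head s t : hit s t -> t <> [::] -> ~ P s.
Proof.
move=> [_ H] Ht; have := H 0; rewrite take0 cats0; apply.
by case: t H Ht.
Qed.

Lemma first_hit s w : P (s ++ w) -> exists t z, w = t ++ z /\ hit s t.
Proof.
elim: w s => [|a w IH] s Hw.
  by exists [::], [::]; split => //; split => // j.
case: (classic (P s)) => Hs.
  by exists [::], (a :: w); split => //; split; [rewrite cats0 | move=> j].
rewrite -cat_rcons in Hw; have [t [z [-> [Ht Hmin]]]] := IH _ Hw.
exists (a :: t), z; split => //; split; first by rewrite -cat_rcons.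
by case=> [|j] //= Hj; [rewrite cats0 | rewrite -cat_rcons; apply: Hmin].
Qed.

Lemma cat_eq_cases y z s t : y ++ z = s ++ t ->
  (exists y', y = s ++ y' /\ t = y' ++ z) \/ (exists z', s = y ++ z' /\ z' <> [::]).
Proof.
elim: y s => [|a y IH] [|b s] /=.
- by move=> ->; left; exists [::].
- by move=> _; right; exists (b :: s).
- by move=> <-; left; exists (a :: y).
- case=> -> /IH [[y' [-> ->]]|[z' [-> Hz]]];
  by [left; exists y' | right; exists z'].
Qed.

Definition anchor s := P s \/ s = [::].
Definition gap s0 u := anchor s0 /\ forall k, 0 < k <= size u -> ~ P (s0 ++ take k u).

Lemma gap_free s0 u : gap s0 u -> free s0 u.
Proof. by move=> [_ H] k Hk; apply: H; lia. Qed.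

Lemma gap_last s0 u : gap s0 u -> u <> [::] -> ~ P (s0 ++ u).
Proof.
move=> [_ H] Hu; have := H (size u); rewrite take_size; apply.
by case: u H Hu => //= a u _ _; lia.
Qed.

Lemma gap_rcons s0 u a : gap s0 u -> ~ P (s0 ++ rcons u a) -> gap s0 (rcons u a).
Proof.
move=> [Ha H] HP; split => // k; rewrite size_rcons => Hk.
case: (ltnP k (size u).+1) => Hku.
  by rewrite -cats1 takel_cat; [apply: H; lia | lia].
have -> : k = size (rcons u a) by rewrite size_rcons; lia.
by rewrite take_size.
Qed.

Lemma last_anchor s : exists s0 u, s = s0 ++ u /\ gap s0 u.
Proof.
elim/last_ind: s => [|s a [s0 [u [-> Hg]]]].
  by exists [::], [::]; split => //; split; [right | move=> k /=; lia].
case: (classic (P (rcons (s0 ++ u) a))) => HP.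
  exists (rcons (s0 ++ u) a), [::]; rewrite cats0; split => //.
  by split; [left | move=> k /=; lia].
exists s0, (rcons u a); rewrite rcons_cat; split => //.
by apply: gap_rcons Hg _; rewrite -rcons_cat.
Qed.

End Extensions.

(* Part (3) holds for every window N >= 1 and needs no assumption on K_mc. *)
Section Safety.
Variable Sigma : finType.
Variable uc : {set Sigma}.
Variables Lm K : lang Sigma.
Variable N : nat.
Hypothesis N_pos : 0 < N.
Implicit Types (s t w y z : word Sigma).

Local Notation L := (pclos Lm).
Local Notation KU := (supcon uc (pclos Lm) K).

Lemma fcons_in_KU s t :
  s = [::] \/ pclos KU s -> fcons uc L K N s t -> KU (s ++ t).
Proof.
move=> Hs Ht.
pose M w := KU w \/ exists t', w = s ++ t' /\ fcons uc L K N s t'.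
have M_sub : lsub M K.
  by move=> w [/supcon_sub //| [t' [-> /supcon_sub [HK _]]]].
have M_ctrl : controllable uc L M.
  move=> y a [z [Hz | [t' [Eyz Ht']]]] Ha HL.
    by have [z' ?] := supcon_ctrl (ex_intro _ z Hz) Ha HL; exists z'; left.
  (* Either y extends s, inside the window of f^N_cons(s), or y is a proper
     prefix of s and hence lies in \overline{K^up}. *)
  case: (cat_eq_cases Eyz) => [[y' [Ey Et']] | [z' [Es Hz']]].
    subst y.
    have [_ Hsize] := supcon_sub Ht'; rewrite Et' size_cat in Hsize.
    have Htr : ltrunc (lquot L s) N (rcons y' a).
      by split; [rewrite /lquot -rcons_cat | rewrite size_rcons; lia].
    have Hy' : pclos (fcons uc L K N s) y' by exists z; rewrite -Et'.
    have [z'' Hz''] := supcon_ctrl Hy' Ha Htr.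
    by exists z''; right; exists (rcons y' a ++ z''); rewrite rcons_cat catA.
  have Hy : pclos KU y.
    case: Hs => [Es0 | HUs]; last by rewrite Es in HUs; apply: pclos_prefix HUs.
    rewrite Es0 in Es; move: (congr1 size Es); rewrite size_cat.
    by case: z' {Es} Hz' => //= *; lia.
  by have [z'' ?] := supcon_ctrl Hy Ha HL; exists z''; left.
by apply: (supcon_max M_sub M_ctrl); right; exists t.
Qed.

Lemma closed_loop_KU s :
  (exists t, fcons uc L K N [::] t) ->
  closed_loop L (gcons uc L K N) s -> pclos KU s.
Proof.
move=> [t0 Ht0]; elim=> [|s1 a _ IH HL [[t Ht] | [Ha _]]].
- by exists t0; apply: (fcons_in_KU (or_introl erefl) Ht0).
- by exists t; rewrite -cats1 -catA; apply: (fcons_in_KU (or_intror IH) Ht).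
- exact: supcon_ctrl IH Ha HL.
Qed.

End Safety.

Section Conservative.
Variable Sigma : finType.
Variable uc : {set Sigma}.
Variables Lm K : lang Sigma.
Variables N n : nat.
Implicit Types (s t u v w x y z : word Sigma).

Local Notation L := (pclos Lm).
Local Notation KM := (Kmc uc (pclos Lm) K).
Local Notation KU := (supcon uc (pclos Lm) K).

Hypothesis K_in_Lm : lsub K Lm.
Hypothesis pclosK_KM : leq_lang (pclos K) (pclos KM).
Hypothesis mcmc_bound : forall m, mcmc_len uc L K m -> m <= n.
Hypothesis N_large : n + 1 <= N.

Lemma pclos_KU_K s : pclos KU s -> pclos K s.
Proof. by case=> t /supcon_sub H; exists t. Qed.

Lemma pclos_KU_L s : pclos KU s -> L s.
Proof. by case=> t /supcon_sub /K_in_Lm H; exists t. Qed.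

(* A gap followed by a shortest completion into K_mc is a segment counted by
   N_mcmc. *)
Lemma gap_bound s0 u t :
  gap KM s0 u -> KM (s0 ++ u ++ t) -> free KM (s0 ++ u) t -> size u + size t <= n.
Proof.
move=> Hg Ht Hfree; rewrite -size_cat; apply: mcmc_bound.
exists s0, (u ++ t); split; first by case: Hg => [? _].
split=> //; split=> //; apply: free_cat (gap_free Hg) _ Hfree.
by move=> Hu _; apply: gap_last.
Qed.

Lemma gap_bound_K s0 u : gap KM s0 u -> pclos K (s0 ++ u) -> size u <= n.
Proof.
move=> Hg /pclosK_KM [y Hy].
have [t [_ [_ Ht]]] := first_hit Hy.
have [HKt _] := Ht; rewrite -catA in HKt.
by have := gap_bound Hg HKt (hit_free Ht); lia.
Qed.

Lemma free_bound s t : KM (s ++ t) -> free KM s t -> size t <= n.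
Proof.
have [s0 [u [-> Hg]]] := last_anchor KM s; rewrite -catA => Ht Hfree.
by have := gap_bound Hg Ht Hfree; lia.
Qed.

(* A string of \overline{K^up} outside K_mc can be continued in
   \overline{K^up}: either it is a proper prefix, or it lies in K but not in
   L_c(G), so an uncontrollable event is possible and controllability applies. *)
Lemma KU_step v : pclos KU v -> ~ KM v -> exists a, pclos KU (rcons v a).
Proof.
move=> [x Hx] HK; case: x Hx => [|a x] Hx; last by exists a, x; rewrite cat_rcons.
rewrite cats0 in Hx; have Kv := supcon_sub Hx.
have [a Ha_uc] : exists a, ~ (a \in uc -> ~ L (rcons v a)).
  apply: not_all_ex_not => Hc; apply: HK; split => //; split => //.
  by exists [::]; rewrite cats0; apply: K_in_Lm.
have [Ha /NNPP HL] := imply_to_and _ _ Ha_uc.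
by exists a; apply: supcon_ctrl => //; exists [::]; rewrite cats0.
Qed.

(* Grow the gap one event at a time; by gap_bound_K it never exceeds N_mcmc,
   so the induction on the remaining room d terminates in K_mc. *)
Lemma KU_reach_gap d s0 u : gap KM s0 u -> n - size u < d -> pclos KU (s0 ++ u) ->
  exists w, KM (s0 ++ u ++ w) /\ pclos KU (s0 ++ u ++ w).
Proof.
elim: d u => [|d IH] u Hg Hd HU; first lia.
case: (classic (KM (s0 ++ u))) => HK; first by exists [::]; rewrite cats0.
have [a Ha] := KU_step HU HK; rewrite rcons_cat in Ha.
case: (classic (KM (s0 ++ rcons u a))) => HKa.
  by exists [:: a]; rewrite cats1.
have Hga := gap_rcons Hg HKa.
have Hlen := gap_bound_K Hga (pclos_KU_K Ha).
have [w Hw] := IH _ Hga ltac:(rewrite size_rcons in Hlen *; lia) Ha.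
by exists (a :: w); rewrite -cat_rcons.
Qed.

Lemma KU_reach v : pclos KU v -> exists w, KM (v ++ w) /\ pclos KU (v ++ w).
Proof.
have [s0 [u [-> Hg]]] := last_anchor KM v => HU.
have [w Hw] := @KU_reach_gap (n - size u).+1 s0 u Hg (ltnSn _) HU.
by exists w; rewrite -!catA.
Qed.

Definition stops s : lang Sigma :=
  fun t => KM (s ++ t) /\ free KM s t /\ pclos KU (s ++ t).

Lemma stops_extend s x a :
  free KM s x -> (x <> [::] -> ~ KM (s ++ x)) -> pclos KU (s ++ rcons x a) ->
  exists t, stops s (rcons x a ++ t).
Proof.
move=> Hx Hjn HU.
have [w [Hw HUw]] := KU_reach HU.
have [t [z [Ewz Ht]]] := first_hit Hw.
exists t; split; first by rewrite catA; case: Ht.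
split; last by apply: (@pclos_prefix _ _ _ z); rewrite Ewz !catA in HUw *.
apply: free_cat; last exact: hit_free Ht.
- rewrite -cats1; apply: free_cat Hx _ _; last exact: free_short.
  by move=> Hx0 _; apply: Hjn.
- by move=> _ Ht0; exact: hit_head Ht Ht0.
Qed.

Lemma stops_sub s : lsub (stops s) (ltrunc (lquot K s) (N - 1)).
Proof.
move=> t [HK [Hfree _]]; split; first by case: HK.
by have := free_bound HK Hfree; lia.
Qed.

(* An uncontrollable event cannot follow a string of K_mc, so the stops after
   s are controllable. *)
Lemma stops_ctrl s : controllable uc (ltrunc (lquot L s) N) (stops s).
Proof.
apply: (@controllable_sub _ _ (lquot L s)) => [t [] //|].
move=> x a [y [_ [Hfree HU]]] Ha HL; rewrite /lquot -rcons_cat in HL.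
have HKx : ~ KM (s ++ x) by move=> [_ [_ Hc]]; apply: (Hc a Ha).
have HUa : pclos KU (s ++ rcons x a).
  rewrite -rcons_cat; apply: supcon_ctrl => //.
  by apply: (@pclos_prefix _ _ _ y); rewrite -catA.
have [t Ht] := stops_extend (free_prefix Hfree) (fun _ => HKx) HUa.
by exists t.
Qed.

Lemma fcons_of_KU s a : pclos KU (rcons s a) -> pclos (fcons uc L K N s) [:: a].
Proof.
rewrite -cats1 => HU.
have [/(_ erefl) []|t Ht] := @stops_extend s [::] a (@free_short _ _ s [::] isT) _ HU.
by exists t; apply: (supcon_max (@stops_sub s) (@stops_ctrl s)).
Qed.

Lemma KU_closed_loop s : pclos KU s -> closed_loop L (gcons uc L K N) s.
Proof.
elim/last_ind: s => [|s a IH] HU; first by constructor.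
apply: cl_rcons; first by apply: IH; rewrite -cats1 in HU; apply: pclos_prefix HU.
- exact: pclos_KU_L HU.
- by left; apply: fcons_of_KU.
Qed.

End Conservative.

Theorem theorem12 (Sigma : finType) (uc : {set Sigma}) (Lm K : lang Sigma) (N : nat) :
  (* L(G) = closure of L_m(G); K ⊆ L_m(G) and K = \overline{K} ∩ L_m(G) *)
  lsub K Lm ->
  leq_lang K (fun s => pclos K s /\ Lm s) ->
  (* \overline{K} = \overline{K_mc} *)
  leq_lang (pclos K) (pclos (Kmc uc (pclos Lm) K)) ->
  (* no starting error: f^N_cons(epsilon) <> empty *)
  (exists t, fcons uc (pclos Lm) K N [::] t) ->
  (* N_mcmc defined and N >= N_mcmc + 1 *)
  (exists n, Nmcmc_is uc (pclos Lm) K n /\ n + 1 <= N) ->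
  leq_lang (closed_loop (pclos Lm) (gcons uc (pclos Lm) K N))
           (pclos (supcon uc (pclos Lm) K)).
Proof.
move=> K_in_Lm _ pclosK_KM start_ok [n [[_ mcmc_bound] N_large]] s; split.
- by apply: closed_loop_KU start_ok; lia.
- exact: (KU_closed_loop K_in_Lm pclosK_KM mcmc_bound N_large).
Qed.
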